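(* Let $X$ be a Bruhat–Tits tree and let $\mathcal{G}$ be a closed subgroup of $\mathrm{Aut}(X)$ acting transitively on the vertex set $X^0$. Then the following three conditions are equivalent: (1) for any two pairs of vertices $(x_1,x_2)$, $(y_1,y_2)$ with $d(x_1,x_2)=d(y_1,y_2)$ there is $g\in\mathcal{G}$ with $g(x_i)=y_i$ for $i=1,2$; (2) for any vertices $x,y,z$ with $d(x,y)=d(x,z)$ there is $g\in\mathcal{G}$ with $g(x)=x$ and $g(y)=z$; (3) for any ends $\omega_1\neq\omega_2$ and $\sigma_1\neq\sigma_2$, any vertex $x_0$ on the apartment $[\omega_1,\omega_2]$ and any vertex $y_0$ on the apartment $[\sigma_1,\sigma_2]$, there is $g\in\mathcal{G}$ with $g(x_0)=y_0$ and $g(\omega_i)=\sigma_i$ for $i=1,2$. In particular, such a $\mathcal{G}$ satisfying any of these conditions is weakly two-transitive.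
   Context: A tree is a nonempty connected graph without cycles; it is a Bruhat–Tits tree if every vertex lies on exactly $m+1$ edges for some fixed integer $m\ge 2$. The distance $d(x,y)$ between vertices is the number of edges on the unique path joining them. $\mathrm{Aut}(X)$ is the group of bijections of $X^0$ preserving $d$, with the topology of pointwise convergence (as maps $X^0\to X^0$, $X^0$ discrete). An infinite path is a sequence $(x_i)_{i\in\mathbb{N}}$ of distinct vertices with consecutive ones adjacent; an end is an equivalence class of infinite paths, two paths being equivalent if they agree after a shift of index from some point on ($x_i=y_{i+k}$ for all $i>p$). Automorphisms act on ends. For distinct ends $\omega,\omega'$, the apartment $[\omega,\omega']$ is the unique doubly infinite path whose two halves represent $\omega$ and $\omega'$. A subgroup $\mathcal{G}\subseteq\mathrm{Aut}(X)$ is weakly two-transitive if it satisfies condition (1). *)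

From Stdlib Require Import List Arith ZArith Lia.
Import ListNotations.

Section Trees.
Variable V : Type.
Variable adj : V -> V -> Prop.

Inductive walk : V -> V -> nat -> Prop :=
| walk_nil : forall x, walk x x 0
| walk_cons : forall x y z n, adj x y -> walk y z n -> walk x z (S n).

Definition dist (x y : V) (n : nat) : Prop :=
  walk x y n /\ forall m, walk x y m -> n <= m.

Fixpoint chain (l : list V) : Prop :=
  match l with
  | a :: ((b :: _) as t) => adj a b /\ chain t
  | _ => True
  end.

Definition has_cycle : Prop :=
  exists v0 l vk, NoDup (v0 :: l ++ [vk])
    /\ 3 <= length (v0 :: l ++ [vk]) /\ chain (v0 :: l ++ [vk]) /\ adj vk v0.

Definition is_tree : Prop :=
  (exists x : V, True) /\
  (forall x y, adj x y -> adj y x) /\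
  (forall x, ~ adj x x) /\
  (forall x y, exists n, walk x y n) /\
  ~ has_cycle.

Definition is_bruhat_tits_tree : Prop :=
  is_tree /\ exists m, 2 <= m /\
    forall x, exists nb : list V, length nb = S m /\ NoDup nb /\
      forall y, adj x y <-> In y nb.

Definition is_aut (g : V -> V) : Prop :=
  (exists g', (forall x, g' (g x) = x) /\ (forall x, g (g' x) = x)) /\
  (forall x y n, dist x y n <-> dist (g x) (g y) n).

Definition is_subgroup (G : (V -> V) -> Prop) : Prop :=
  (forall g, G g -> is_aut g) /\
  G (fun x => x) /\
  (forall g h, G g -> G h -> G (fun x => g (h x))) /\
  (forall g, G g -> exists g', G g' /\ (forall x, g' (g x) = x) /\ (forall x, g (g' x) = x)).

(* closed in Aut(X) for the topology of pointwise convergence (X^0 discrete):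
   an automorphism every basic neighbourhood of which meets G lies in G *)
Definition is_closed (G : (V -> V) -> Prop) : Prop :=
  forall h, is_aut h ->
    (forall F : list V, exists g, G g /\ forall x, In x F -> g x = h x) -> G h.

Definition vertex_transitive (G : (V -> V) -> Prop) : Prop :=
  forall x y, exists g, G g /\ g x = y.

Definition ray (r : nat -> V) : Prop :=
  (forall i j, r i = r j -> i = j) /\ (forall i, adj (r i) (r (S i))).

Definition same_end (r s : nat -> V) : Prop :=
  exists k p, (forall i, p < i -> r i = s (i + k)) \/ (forall i, p < i -> s i = r (i + k)).

Definition line (h : Z -> V) : Prop :=
  (forall i j, h i = h j -> i = j) /\ (forall i, adj (h i) (h (Z.succ i))).

(* x0 lies on the apartment [w1,w2]: the doubly infinite path with halves
   representing w1 and w2 passes through x0 *)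
Definition on_apartment (w1 w2 : nat -> V) (x0 : V) : Prop :=
  exists h, line h /\ same_end (fun n => h (Z.of_nat n)) w1
    /\ same_end (fun n => h (Z.opp (Z.of_nat n))) w2 /\ exists z, h z = x0.

Definition weakly_two_transitive (G : (V -> V) -> Prop) : Prop :=
  forall x1 x2 y1 y2 n, dist x1 x2 n -> dist y1 y2 n ->
    exists g, G g /\ g x1 = y1 /\ g x2 = y2.

Definition cond2 (G : (V -> V) -> Prop) : Prop :=
  forall x y z n, dist x y n -> dist x z n ->
    exists g, G g /\ g x = x /\ g y = z.

Definition cond3 (G : (V -> V) -> Prop) : Prop :=
  forall w1 w2 s1 s2 x0 y0,
    ray w1 -> ray w2 -> ray s1 -> ray s2 ->
    ~ same_end w1 w2 -> ~ same_end s1 s2 ->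
    on_apartment w1 w2 x0 -> on_apartment s1 s2 y0 ->
    exists g, G g /\ g x0 = y0 /\
      same_end (fun n => g (w1 n)) s1 /\ same_end (fun n => g (w2 n)) s2.

End Trees.

(* (1) <-> (2): compose with an element moving x1 to y1 (vertex transitivity).
   (3) -> (2): in a tree without leaves every geodesic [x, y] extends to a ray
   from x, and every ray is half of an apartment through its origin.  An element
   given by (3) fixes x and maps the ray through y to a ray with the same end as
   the ray through z; two rays from x with a common end coincide (geodesics in a
   tree are unique), so y goes to z.
   (1) -> (3): by (1), the segment of length 2n of one apartment around x0 can be
   moved onto that of another around y0.  These elements all send x0 to y0, so by
   local finiteness a diagonal (Koenig) argument gives a pointwise cluster point;
   it is an automorphism, lies in G since G is closed, and maps the first
   apartment onto the second, hence ends to ends. *)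

From Stdlib Require Import List Arith ZArith Lia Classical ClassicalEpsilon ListDec.
Import ListNotations.

Lemma last_In {V} (c : V) l d : In (last (c :: l) d) (c :: l).
Proof.
  revert c; induction l as [|b l IH]; intros c; simpl; auto.
  right. apply IH.
Qed.

Lemma last_def {V} (c : V) l d d' : last (c :: l) d = last (c :: l) d'.
Proof. revert c; induction l as [|b l IH]; intros c; [reflexivity|]. exact (IH b). Qed.

Lemma last_app_cons {V} (l1 : list V) u l2 d : last (l1 ++ u :: l2) d = last (u :: l2) d.
Proof.
  induction l1 as [|a l1 IH]; simpl; auto.
  destruct l1; simpl in *; auto.
Qed.

Lemma last_nth {V} (l : list V) : forall x, last (x :: l) x = nth (length l) (x :: l) x.
Proof.
  induction l as [|b l IH]; intros x; [reflexivity|].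
  change (last (b :: l) x = nth (length l) (b :: l) x).
  rewrite (last_def b l x b), IH.
  apply nth_indep. simpl. lia.
Qed.

Lemma split_first {V} (P : V -> Prop) l :
  (exists x, In x l /\ P x) ->
  exists l1 e l2, l = l1 ++ e :: l2 /\ P e /\ (forall y, In y l1 -> ~ P y).
Proof.
  induction l as [|a l IH]; intros [x [Hx HP]]; [destruct Hx|].
  destruct (classic (P a)) as [Ha|Ha].
  - exists [], a, l. simpl. repeat split; auto.
  - destruct Hx as [Hx|Hx]; [subst; contradiction|].
    destruct IH as [l1 [e [l2 [E [He Hy]]]]]; [eauto|].
    exists (a :: l1), e, l2. subst. simpl. repeat split; auto.
    intros y [Hy'|Hy']; subst; auto.
Qed.

Lemma NoDup_map_seq {V} (f : nat -> V) n : forall s,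
  (forall a b, s <= a -> a < b -> b < s + n -> f a <> f b) -> NoDup (map f (seq s n)).
Proof.
  induction n as [|n IH]; intros s H; simpl; constructor.
  - intros Hin. apply in_map_iff in Hin. destruct Hin as [b [Hb Hin]].
    apply in_seq in Hin. apply (H s b); auto; lia.
  - apply IH. intros a b H1 H2 H3. apply H; lia.
Qed.

Lemma map_seq_ext {V} (r s : nat -> V) n : forall st,
  map r (seq st n) = map s (seq st n) -> forall t, st <= t < st + n -> r t = s t.
Proof.
  induction n as [|n IH]; intros st E t Ht; [lia|].
  simpl in E. inversion E. destruct (Nat.eq_dec t st); [subst; auto|].
  apply (IH (S st)); auto. lia.
Qed.

Lemma map_eq_in {V W} (f g : V -> W) L x : map f L = map g L -> In x L -> f x = g x.
Proof.
  induction L as [|a L IH]; simpl; intros E Hx; [destruct Hx|].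
  inversion E. destruct Hx; subst; auto.
Qed.

Lemma list_bound {V} (f : V -> nat) (F : list V) : exists J, forall x, In x F -> f x <= J.
Proof.
  induction F as [|a F [J HJ]]; [exists 0; intros x []|].
  exists (max (f a) J). intros x [E|Hx]; [subst; lia|]. specialize (HJ x Hx). lia.
Qed.

Lemma same_end_iff {V} (r s : nat -> V) :
  same_end V r s <-> exists a b p, forall i, p < i -> r (i + a) = s (i + b).
Proof.
  split.
  - intros [k [p [H|H]]].
    + exists 0, k, p. intros i Hi. rewrite Nat.add_0_r. auto.
    + exists k, 0, p. intros i Hi. rewrite Nat.add_0_r. symmetry. auto.
  - intros [a [b [p H]]]. destruct (le_lt_dec a b).
    + exists (b - a), (p + a). left. intros j Hj.
      replace j with ((j - a) + a) at 1 by lia. rewrite H by lia. f_equal. lia.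
    + exists (a - b), (p + b). right. intros j Hj.
      replace j with ((j - b) + b) at 1 by lia. rewrite <- H by lia. f_equal. lia.
Qed.

Lemma same_end_sym {V} (r s : nat -> V) : same_end V r s -> same_end V s r.
Proof.
  rewrite !same_end_iff. intros [a [b [p H]]]. exists b, a, p. intros. symmetry; auto.
Qed.

Lemma same_end_trans {V} (r s t : nat -> V) :
  same_end V r s -> same_end V s t -> same_end V r t.
Proof.
  rewrite !same_end_iff. intros [a [b [p H]]] [c [d [q H']]].
  exists (a + c), (b + d), (p + q). intros i Hi.
  replace (i + (a + c)) with ((i + c) + a) by lia. rewrite H by lia.
  replace (i + c + b) with ((i + b) + c) by lia. rewrite H' by lia. f_equal. lia.
Qed.

Lemma same_end_ext {V} (r s : nat -> V) : (forall i, r i = s i) -> same_end V r s.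
Proof. intros H. exists 0, 0. left. intros. rewrite Nat.add_0_r. auto. Qed.

Lemma same_end_comp {V} (g : V -> V) (r s : nat -> V) :
  same_end V r s -> same_end V (fun n => g (r n)) (fun n => g (s n)).
Proof. intros [k [p [H|H]]]; exists k, p; [left|right]; intros; rewrite H; auto. Qed.

Lemma same_end_shift_pos {V} (k : Z -> V) c :
  same_end V (fun n => k (Z.of_nat n + c)%Z) (fun n => k (Z.of_nat n)).
Proof.
  apply same_end_iff. destruct (Z_le_gt_dec 0 c).
  - exists 0, (Z.to_nat c), 0. intros i _. f_equal. lia.
  - exists (Z.to_nat (- c)), 0, 0. intros i _. f_equal. lia.
Qed.

Lemma same_end_shift_neg {V} (k : Z -> V) c :
  same_end V (fun n => k (- Z.of_nat n + c)%Z) (fun n => k (- Z.of_nat n)%Z).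
Proof.
  apply same_end_iff. destruct (Z_le_gt_dec 0 c).
  - exists (Z.to_nat c), 0, 0. intros i _. f_equal. lia.
  - exists 0, (Z.to_nat (- c)), 0. intros i _. f_equal. lia.
Qed.

(* A diagonal (Koenig / Tychonoff) argument: a sequence of maps [gs n] sending
   each finite set [L j] of an exhausting family into a fixed finite set [B j]
   has a cluster point for the topology of pointwise convergence. *)

Definition infinite (S : nat -> Prop) := forall N, exists n, N <= n /\ S n.

Lemma infinite_mono (S T : nat -> Prop) : (forall n, S n -> T n) -> infinite S -> infinite T.
Proof. intros H I N. destruct (I N) as [n [H1 H2]]. eauto. Qed.

Lemma infinite_pigeonhole {V} (B : list V) : forall (S : nat -> Prop) (f : nat -> V),
  infinite S -> (forall n, S n -> In (f n) B) -> exists b, infinite (fun n => S n /\ f n = b).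
Proof.
  induction B as [|b B IH]; intros S f I H.
  - destruct (I 0) as [n [_ Hn]]. destruct (H n Hn).
  - destruct (classic (infinite (fun n => S n /\ f n = b))) as [Hb|Hb]; [eauto|].
    unfold infinite in Hb. apply not_all_ex_not in Hb. destruct Hb as [N0 HN0].
    destruct (IH (fun n => S n /\ N0 <= n) f) as [b' Hb'].
    + intros N. destruct (I (max N N0)) as [n [H1 H2]]. exists n. split; [lia|split; auto; lia].
    + intros n [Hn Hle]. destruct (H n Hn) as [E|E]; auto.
      exfalso. apply HN0. exists n. auto.
    + exists b'. revert Hb'. apply infinite_mono. intros n [[? ?] ?]. auto.
Qed.

Lemma infinite_pigeonhole_list {V} (gs : nat -> V -> V) (B L : list V) :
  forall (S : nat -> Prop), infinite S -> (forall n x, In x L -> In (gs n x) B) ->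
  exists ys, infinite (fun n => S n /\ map (gs n) L = ys).
Proof.
  induction L as [|a L IH]; intros S I H.
  - exists []. revert I. apply infinite_mono. simpl. auto.
  - destruct (IH S I) as [ys Hys]. { intros n x Hx. apply H. right; auto. }
    destruct (infinite_pigeonhole B _ (fun n => gs n a) Hys) as [b Hb].
    { intros n _. apply H. left; auto. }
    exists (b :: ys). revert Hb. apply infinite_mono. intros n [[H1 H2] H3].
    simpl. rewrite H2, H3. auto.
Qed.

(* [refine gs L j] is the set of indices kept after [j] refinement steps:
   at step [j'] one keeps an infinite set on which [map (gs n) (L j')] is constant. *)
Fixpoint refine {V} (gs : nat -> V -> V) (L : nat -> list V) (j : nat) : nat -> Prop :=
  match j with
  | 0 => fun _ => True
  | S j' => fun n => refine gs L j' n /\ map (gs n) (L j') =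
      epsilon (inhabits nil)
        (fun ys => infinite (fun m => refine gs L j' m /\ map (gs m) (L j') = ys))
  end.

Section Diagonal.
Variable V : Type.
Variable gs : nat -> V -> V.
Variables L B : nat -> list V.
Hypothesis maps_into : forall j n x, In x (L j) -> In (gs n x) (B j).

Lemma refine_infinite j : infinite (refine gs L j).
Proof.
  induction j as [|j IH].
  - intros N. exists N. simpl. auto.
  - simpl. apply (epsilon_spec (inhabits nil)
      (fun ys => infinite (fun m => refine gs L j m /\ map (gs m) (L j) = ys))).
    apply (infinite_pigeonhole_list gs (B j) (L j)); auto.
Qed.

Lemma refine_mono j k n : j <= k -> refine gs L k n -> refine gs L j n.
Proof. induction 1; auto. intros [H1 _]. auto. Qed.

Lemma refine_agree j n n' x :
  refine gs L (S j) n -> refine gs L (S j) n' -> In x (L j) -> gs n x = gs n' x.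
Proof.
  intros [_ E1] [_ E2] Hx. rewrite <- E2 in E1. exact (map_eq_in _ _ _ _ E1 Hx).
Qed.

(* The diagonal limit: [phi x] is the common value [gs n x] on the indices
   kept after the step handling [x]. *)
Lemma diagonal_cluster_point (covers : forall x, exists j, In x (L j)) :
  exists phi : V -> V, forall F N, exists n, N <= n /\ forall x, In x F -> gs n x = phi x.
Proof.
  set (rank := fun x => epsilon (inhabits 0) (fun j => In x (L j))).
  assert (Hrank : forall x, In x (L (rank x))).
  { intros x. apply (epsilon_spec (inhabits 0) (fun j => In x (L j))). apply covers. }
  set (n0 := fun x => epsilon (inhabits 0) (fun n => refine gs L (S (rank x)) n)).
  assert (Hn0 : forall x, refine gs L (S (rank x)) (n0 x)).
  { intros x. apply (epsilon_spec (inhabits 0) (fun n => refine gs L (S (rank x)) n)).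
    destruct (refine_infinite (S (rank x)) 0) as [n [_ Hn]]. eauto. }
  exists (fun x => gs (n0 x) x). intros F N.
  destruct (list_bound rank F) as [J HJ].
  destruct (refine_infinite (S J) N) as [n [HN Hn]]. exists n. split; auto.
  intros x Hx. apply (refine_agree (rank x)); auto.
  apply (refine_mono (S (rank x)) (S J)); auto. specialize (HJ x Hx). lia.
Qed.

End Diagonal.

Section TreeGeometry.
Variable V : Type.
Variable adj : V -> V -> Prop.
Hypothesis adj_sym : forall x y, adj x y -> adj y x.
Hypothesis adj_irrefl : forall x, ~ adj x x.
Hypothesis acyclic : ~ has_cycle V adj.

Local Notation chain := (chain V adj).
Local Notation walk := (walk V adj).
Local Notation dist := (dist V adj).
Local Notation ray := (ray V adj).
Local Notation line := (line V adj).

Lemma chain_app l1 u l2 : chain (l1 ++ u :: l2) <-> chain (l1 ++ [u]) /\ chain (u :: l2).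
Proof.
  induction l1 as [|a l1 IH]; simpl.
  - tauto.
  - destruct l1 as [|c l1']; simpl in *.
    + destruct l2; simpl; tauto.
    + rewrite IH. tauto.
Qed.

Lemma chain_prefix l1 l2 : chain (l1 ++ l2) -> chain l1.
Proof.
  induction l1 as [|a l1 IH]; simpl; auto.
  destruct l1 as [|c l1']; simpl in *; auto.
  intros [H1 H2]; split; [exact H1|exact (IH H2)].
Qed.

Lemma chain_tail a l : chain (a :: l) -> chain l.
Proof. destruct l; simpl; tauto. Qed.

Lemma chain_rev l : chain l -> chain (rev l).
Proof.
  induction l as [|a l IH]; simpl; auto.
  destruct l as [|b l']; simpl; auto.
  intros [H1 H2]. specialize (IH H2). simpl in IH.
  rewrite <- app_assoc. simpl. apply chain_app. split; auto.
  simpl. split; auto.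
Qed.

Lemma chain_seq (r : nat -> V) (Hr : forall i, adj (r i) (r (S i))) n :
  forall s, chain (map r (seq s n)).
Proof.
  induction n as [|n IH]; intros s; simpl; auto.
  destruct n; simpl; auto. split; auto. apply (IH (S s)).
Qed.

Lemma chain_nth (d : V) L :
  chain L -> forall i, S i < length L -> adj (nth i L d) (nth (S i) L d).
Proof.
  induction L as [|a L IH]; simpl; intros H i Hi; [lia|].
  destruct L as [|b L']; simpl in *; [lia|].
  destruct H as [H1 H2]. destruct i; simpl; auto.
  apply (IH H2 i). simpl. lia.
Qed.

Lemma closed_chain_cycle a l :
  NoDup (a :: l) -> chain (a :: l) -> 2 <= length l -> adj (last l a) a -> has_cycle V adj.
Proof.
  intros N C Hl E.
  destruct (exists_last (l := l)) as [l' [vk El]]; [intros ->; simpl in Hl; lia|].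
  subst l. rewrite last_last in E.
  exists a, l', vk. rewrite length_app in Hl. simpl in Hl.
  split; [exact N|split; [simpl; rewrite length_app; simpl; lia|split; assumption]].
Qed.

Lemma glued_paths_cycle a p u q :
  NoDup (a :: p ++ [u]) -> NoDup (a :: q ++ [u]) ->
  chain (a :: p ++ [u]) -> chain (a :: q ++ [u]) ->
  (forall y, In y p -> ~ In y (q ++ [u])) -> p ++ q <> [] -> has_cycle V adj.
Proof.
  intros Np Nq Cp Cq Hdisj Hne.
  apply (closed_chain_cycle a (p ++ u :: rev q)).
  - inversion Np as [|? ? Nap Np']; subst. inversion Nq as [|? ? Naq Nq']; subst.
    pose proof (NoDup_remove_2 p [] u Np') as Hup. rewrite app_nil_r in Hup.
    pose proof (NoDup_remove_2 q [] u Nq') as Huq. rewrite app_nil_r in Huq.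
    constructor.
    + rewrite in_app_iff. intros [H|[H|H]].
      * apply Nap. apply in_or_app. auto.
      * apply Nap. apply in_or_app. right; left; auto.
      * apply Naq. apply in_or_app. left. apply in_rev. auto.
    + apply NoDup_app.
      * apply NoDup_app_remove_r in Np'. auto.
      * constructor.
        -- intro H. apply in_rev in H. exact (Huq H).
        -- apply NoDup_rev. apply NoDup_app_remove_r in Nq'. auto.
      * intros x Hx [Hx'|Hx'].
        -- subst x. exact (Hup Hx).
        -- apply in_rev in Hx'. apply (Hdisj x Hx). apply in_or_app. auto.
  - change (chain ((a :: p) ++ u :: rev q)). apply chain_app. split; [exact Cp|].
    apply chain_rev in Cq. simpl in Cq. rewrite rev_app_distr in Cq. simpl in Cq.
    apply (chain_prefix (u :: rev q) [a]). exact Cq.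
  - rewrite length_app. simpl. rewrite length_rev.
    destruct p, q; simpl in *; try lia. contradiction.
  - rewrite last_app_cons. apply adj_sym.
    destruct q as [|q0 q']; [exact (proj1 Cq)|].
    replace (last (u :: rev (q0 :: q')) a) with q0 by
      (change (u :: rev (q0 :: q')) with ((u :: rev q') ++ [q0]); symmetry; apply last_last).
    exact (proj1 Cq).
Qed.

Lemma simple_path_unique :
  forall l1 a l2, NoDup (a :: l1) -> NoDup (a :: l2) -> chain (a :: l1) ->
  chain (a :: l2) -> last (a :: l1) a = last (a :: l2) a -> l1 = l2.
Proof.
  induction l1 as [|c l1' IH]; intros a l2 N1 N2 C1 C2 E.
  - destruct l2 as [|e l2']; auto. exfalso.
    pose proof (last_In e l2' a) as HI. change (a = last (e :: l2') a) in E.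
    rewrite <- E in HI. inversion N2; subst. contradiction.
  - destruct l2 as [|e l2'].
    { exfalso. pose proof (last_In c l1' a) as HI. change (last (c :: l1') a = a) in E.
      rewrite E in HI. inversion N1; subst. contradiction. }
    destruct (classic (c = e)) as [<-|Hce].
    + f_equal. apply (IH c).
      * inversion N1; auto.
      * inversion N2; auto.
      * exact (chain_tail a _ C1).
      * exact (chain_tail a _ C2).
      * rewrite (last_def c l1' c a), (last_def c l2' c a). exact E.
    + (* otherwise the two paths first meet again at some [u] and enclose a cycle *)
      exfalso.
      assert (Hb : In (last (c :: l1') a) (e :: l2')).
      { change (last (c :: l1') a = last (e :: l2') a) in E.
        rewrite E. apply last_In. }
      destruct (split_first (fun y => In y (e :: l2')) (c :: l1'))
        as [p1 [u [p2 [Ep [Hu Hp1]]]]]; [eexists; split; [apply last_In|exact Hb]|].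
      destruct (in_split _ _ Hu) as [q1 [q2 Eq]].
      assert (Split : forall l1 l2, a :: l1 ++ u :: l2 = (a :: l1 ++ [u]) ++ l2)
        by (intros; simpl; rewrite <- app_assoc; reflexivity).
      rewrite Ep, Split in N1, C1. rewrite Eq, Split in N2, C2.
      apply acyclic, (glued_paths_cycle a p1 u q1).
      * exact (NoDup_app_remove_r _ _ N1).
      * exact (NoDup_app_remove_r _ _ N2).
      * exact (chain_prefix _ _ C1).
      * exact (chain_prefix _ _ C2).
      * intros y Hy Hy'. apply (Hp1 y Hy). rewrite Eq. rewrite in_app_iff in *. simpl in *. tauto.
      * destruct p1, q1; simpl in *; try discriminate.
        inversion Ep. inversion Eq. congruence.
Qed.

Lemma walk0 x y : walk x y 0 -> x = y.
Proof. intros H. inversion H. reflexivity. Qed.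

Lemma walk_to_list x y n : walk x y n ->
  exists l, length l = n /\ chain (x :: l) /\ last (x :: l) x = y.
Proof.
  induction 1 as [x|x y z n Hxy Hw IH].
  - exists []. simpl. auto.
  - destruct IH as [l [Hl [Hc He]]]. exists (y :: l). simpl length. split; [lia|]. split.
    + change (adj x y /\ chain (y :: l)). auto.
    + change (last (y :: l) x = z). rewrite (last_def y l x y). exact He.
Qed.

Lemma list_to_walk l : forall x, chain (x :: l) -> walk x (last (x :: l) x) (length l).
Proof.
  induction l as [|b l IH]; intros x Hc.
  - constructor.
  - destruct Hc as [H1 H2]. change (last (b :: l) x) with (last (x :: b :: l) x).
    simpl length. apply walk_cons with b; auto.
    change (last (x :: b :: l) x) with (last (b :: l) x).
    rewrite (last_def b l x b). apply IH. exact H2.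
Qed.

Lemma dist_exists x y n : walk x y n -> exists d, dist x y d.
Proof.
  revert n. induction n as [n IH] using (well_founded_induction lt_wf). intros Hw.
  destruct (classic (exists m, m < n /\ walk x y m)) as [[m [Hm Hw']]|Hno].
  - exact (IH m Hm Hw').
  - exists n. split; auto. intros m Hm. destruct (le_lt_dec n m); auto.
    exfalso. apply Hno. eauto.
Qed.

Lemma adj_dist1 x y : adj x y <-> dist x y 1.
Proof.
  split.
  - intros H. split.
    + apply walk_cons with y; auto. constructor.
    + intros m Hm. destruct m; [|lia]. apply walk0 in Hm. subst. exfalso; exact (adj_irrefl _ H).
  - intros [H _]. inversion H; subst. apply walk0 in H4. subst. auto.
Qed.

Lemma shortcut x l : chain (x :: l) -> ~ NoDup (x :: l) ->
  exists l', length l' < length l /\ chain (x :: l') /\ last (x :: l') x = last (x :: l) x.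
Proof.
  intros Hc Hnd.
  destruct (not_NoDup (fun a b => classic (a = b)) Hnd) as [u [A [B [C E]]]].
  destruct A as [|a A'].
  - simpl in E. inversion E; subst. exists C. split.
    + rewrite length_app. simpl. lia.
    + split.
      * apply (chain_app B u C). apply (chain_tail u). exact Hc.
      * change (u :: B ++ u :: C) with ((u :: B) ++ u :: C). rewrite last_app_cons. reflexivity.
  - simpl in E. inversion E; subst. exists (A' ++ u :: C). split.
    + rewrite !length_app. simpl. rewrite length_app. simpl. lia.
    + assert (Hc' : chain ((a :: A') ++ u :: B ++ u :: C)) by exact Hc.
      apply chain_app in Hc'. destruct Hc' as [H1 H2].
      change (u :: B ++ u :: C) with ((u :: B) ++ u :: C) in H2.
      apply chain_app in H2. destruct H2 as [_ H3]. split.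
      * change (chain ((a :: A') ++ u :: C)). apply chain_app. auto.
      * change (a :: A' ++ u :: C) with ((a :: A') ++ u :: C).
        replace (a :: A' ++ u :: B ++ u :: C) with ((a :: A' ++ u :: B) ++ u :: C)
          by (simpl; rewrite <- app_assoc; reflexivity).
        rewrite !last_app_cons. reflexivity.
Qed.

Lemma geodesic_simple_path x y d : dist x y d ->
  exists l, length l = d /\ chain (x :: l) /\ last (x :: l) x = y /\ NoDup (x :: l).
Proof.
  intros [Hw Hmin]. destruct (walk_to_list _ _ _ Hw) as [l [Hl [Hc He]]].
  exists l. repeat split; auto.
  destruct (classic (NoDup (x :: l))) as [|Hn]; auto. exfalso.
  destruct (shortcut x l Hc Hn) as [l' [Hlt [Hc' He']]].
  pose proof (list_to_walk l' x Hc') as W. rewrite He', He in W.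
  apply Hmin in W. lia.
Qed.

Lemma nonbacktracking_injective (f : nat -> V)
  (Ha : forall i, adj (f i) (f (S i))) (Hn : forall i, f i <> f (S (S i))) :
  forall i j, f i = f j -> i = j.
Proof.
  assert (K : forall d i, f i <> f (i + S d)).
  { intros d. induction d as [d IH] using (well_founded_induction lt_wf). intros i E.
    destruct d as [|[|d']].
    - rewrite Nat.add_1_r in E. pose proof (Ha i) as H. rewrite <- E in H.
      exact (adj_irrefl _ H).
    - replace (i + 2) with (S (S i)) in E by lia. exact (Hn i E).
    - (* the first return to [f i] closes a cycle *)
      apply acyclic, (closed_chain_cycle (f i) (map f (seq (S i) (S (S d'))))).

      + change (NoDup (map f (seq i (S (S (S d')))))). apply NoDup_map_seq.
        intros a b H1 H2 H3. replace b with (a + S (b - a - 1)) by lia. apply IH. lia.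
      + change (chain (map f (seq i (S (S (S d')))))). apply chain_seq. exact Ha.
      + rewrite length_map, length_seq. lia.
      + rewrite seq_S, map_app. change (map f [S i + S d']) with [f (S i + S d')].
        rewrite last_last, E.
        replace (i + S (S (S d'))) with (S (S i + S d')) by lia. apply Ha. }
  intros i j E. destruct (lt_eq_lt_dec i j) as [[H|H]|H]; auto.
  - exfalso. apply (K (j - i - 1) i). replace (i + S (j - i - 1)) with j by lia. exact E.
  - exfalso. apply (K (i - j - 1) j). replace (j + S (i - j - 1)) with i by lia. auto.
Qed.

Lemma ray_list r a : ray r ->
  NoDup (r 0 :: map r (seq 1 a)) /\ chain (r 0 :: map r (seq 1 a)) /\
  last (r 0 :: map r (seq 1 a)) (r 0) = r a.
Proof.
  intros [Hi Ha]. change (r 0 :: map r (seq 1 a)) with (map r (seq 0 (S a))).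
  split; [|split].
  - apply NoDup_map_seq. intros x y _ H _ E. apply Hi in E. lia.
  - apply chain_seq; auto.
  - rewrite seq_S, map_app. simpl. apply last_last.
Qed.

Lemma rays_agree r s a b : ray r -> ray s -> r 0 = s 0 -> r a = s b ->
  a = b /\ forall t, t <= a -> r t = s t.
Proof.
  intros Hr Hs E0 Eab.
  destruct (ray_list r a Hr) as [N1 [C1 L1]].
  destruct (ray_list s b Hs) as [N2 [C2 L2]].
  rewrite E0 in N1, C1, L1.
  assert (E : map r (seq 1 a) = map s (seq 1 b))
    by (apply (simple_path_unique _ (s 0)); auto; congruence).
  assert (a = b)
    by (apply (f_equal (@length V)) in E; rewrite !length_map, !length_seq in E; auto).
  subst b. split; auto. intros t Ht. destruct t; auto.
  apply (map_seq_ext r s a 1 E). lia.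
Qed.

Lemma ray_dist r m : ray r -> dist (r 0) (r m) m.
Proof.
  intros Hr. destruct (ray_list r m Hr) as [N1 [C1 L1]].
  pose proof (list_to_walk _ _ C1) as W. rewrite L1, length_map, length_seq in W.
  split; auto. intros m' W'.
  destruct (dist_exists _ _ _ W') as [d Hd].
  pose proof Hd as [_ Hmin]. apply Hmin in W'.
  destruct (geodesic_simple_path _ _ _ Hd) as [l [Hl [Hc [He Hn]]]].
  assert (E : l = map r (seq 1 m))
    by (apply (simple_path_unique _ (r 0)); auto; congruence).
  subst l. rewrite length_map, length_seq in Hl. lia.
Qed.

Lemma nonbacktracking_line (h : Z -> V)
  (Ha : forall i, adj (h i) (h (Z.succ i))) (Hb : forall i, h i <> h (Z.succ (Z.succ i))) :
  line h.
Proof.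
  split; auto.
  assert (K : forall i j, (i < j)%Z -> h i <> h j).
  { intros i j Hij E.
    set (f := fun t => h (i + Z.of_nat t)%Z).
    assert (Fa : forall t, adj (f t) (f (S t))).
    { intros t. unfold f. replace (i + Z.of_nat (S t))%Z with (Z.succ (i + Z.of_nat t)) by lia.
      apply Ha. }
    assert (Fb : forall t, f t <> f (S (S t))).
    { intros t. unfold f.
      replace (i + Z.of_nat (S (S t)))%Z with (Z.succ (Z.succ (i + Z.of_nat t))) by lia.
      apply Hb. }
    assert (E' : f 0 = f (Z.to_nat (j - i))).
    { unfold f. replace (i + Z.of_nat 0)%Z with i by lia.
      replace (i + Z.of_nat (Z.to_nat (j - i)))%Z with j by lia. exact E. }
    apply (nonbacktracking_injective f Fa Fb) in E'. lia. }
  intros i j E. destruct (Z.lt_trichotomy i j) as [H|[H|H]]; auto.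
  - exfalso. exact (K i j H E).
  - exfalso. exact (K j i H (eq_sym E)).
Qed.

Lemma line_translate h c : line h -> line (fun i => h (i + c)%Z).
Proof.
  intros [Hi Ha]. split.
  - intros i j E. apply Hi in E. lia.
  - intros i. replace (Z.succ i + c)%Z with (Z.succ (i + c)) by lia. apply Ha.
Qed.

Lemma line_half_ray h n : line h -> ray (fun t => h (Z.of_nat t - Z.of_nat n)%Z).
Proof.
  intros [Hi Ha]. split.
  - intros i j E. apply Hi in E. lia.
  - intros i.
    replace (Z.of_nat (S i) - Z.of_nat n)%Z with (Z.succ (Z.of_nat i - Z.of_nat n)) by lia.
    apply Ha.
Qed.

Lemma aut_facts g : is_aut V adj g ->
  (forall x y, g x = g y -> x = y) /\ (forall x y, adj x y -> adj (g x) (g y)).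
Proof.
  intros [[g' [H1 H2]] Hd]. split.
  - intros x y E. rewrite <- (H1 x), <- (H1 y), E. reflexivity.
  - intros x y H. apply (proj2 (adj_dist1 _ _)), (proj1 (Hd _ _ _)), (proj1 (adj_dist1 _ _)), H.
Qed.

Lemma aut_ray g r : is_aut V adj g -> ray r -> ray (fun n => g (r n)).
Proof.
  intros Ha [Hi Hr]. destruct (aut_facts g Ha) as [Gi Ga]. split; auto.
Qed.

(* Trees without leaves: [step a b] is a neighbour of [b] different from [a]. *)
Variable step : V -> V -> V.
Hypothesis step_spec : forall a b, adj b (step a b) /\ step a b <> a.

Fixpoint greedy_pair (a b : V) (i : nat) : V * V :=
  match i with
  | 0 => (a, b)
  | S i' => let p := greedy_pair a b i' in (snd p, step (fst p) (snd p))
  end.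

Definition greedy a b i := fst (greedy_pair a b i).

Lemma greedy_SS a b i : greedy a b (S (S i)) = step (greedy a b i) (greedy a b (S i)).
Proof. reflexivity. Qed.

Lemma greedy_nonbacktracking a b : adj a b ->
  (forall i, adj (greedy a b i) (greedy a b (S i))) /\
  (forall i, greedy a b i <> greedy a b (S (S i))).
Proof.
  intros Hab. split.
  - induction i as [|i IH]; [exact Hab|]. rewrite greedy_SS. apply step_spec.
  - intros i. rewrite greedy_SS. intro E. apply (proj2 (step_spec (greedy a b i) (greedy a b (S i)))). auto.
Qed.

Lemma extend_nonbacktracking (f : nat -> V) n : 1 <= n ->
  (forall i, i < n -> adj (f i) (f (S i))) -> (forall i, S (S i) <= n -> f i <> f (S (S i))) ->
  exists F, (forall i, adj (F i) (F (S i))) /\ (forall i, F i <> F (S (S i))) /\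
    forall i, i <= n -> F i = f i.
Proof.
  intros Hn Ha Hb.
  set (u := greedy (f (n - 1)) (f n)).
  assert (Hadj : adj (f (n - 1)) (f n))
    by (replace n with (S (n - 1)) at 2 by lia; apply Ha; lia).
  destruct (greedy_nonbacktracking _ _ Hadj) as [Ua Ub]. fold u in Ua, Ub.
  assert (U0 : u 0 = f (n - 1)) by reflexivity.
  assert (U1 : u 1 = f n) by reflexivity.
  set (F := fun i => if i <? n then f i else u (i - n + 1)).
  assert (F1 : forall i, i < n -> F i = f i).
  { intros i Hi. unfold F. destruct (Nat.ltb_spec i n); [auto|lia]. }
  assert (F2 : forall i, n <= i -> F i = u (i - n + 1)).
  { intros i Hi. unfold F. destruct (Nat.ltb_spec i n); [lia|auto]. }
  exists F. split; [|split].
  - intros i. destruct (le_lt_dec n i).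
    + rewrite !F2 by lia. replace (S i - n + 1) with (S (i - n + 1)) by lia. apply Ua.
    + rewrite F1 by lia. destruct (Nat.eq_dec (S i) n) as [e|].
      * rewrite F2 by lia. replace (S i - n + 1) with 1 by lia. rewrite U1, <- e. apply Ha. lia.
      * rewrite F1 by lia. apply Ha. lia.
  - intros i. destruct (le_lt_dec n i).
    + rewrite !F2 by lia. replace (S (S i) - n + 1) with (S (S (i - n + 1))) by lia. apply Ub.
    + rewrite F1 by lia. destruct (le_lt_dec n (S (S i))).
      * rewrite F2 by lia. destruct (Nat.eq_dec (S (S i)) n) as [e|].
        -- replace (S (S i) - n + 1) with 1 by lia. rewrite U1, <- e. apply Hb. lia.
        -- replace (S (S i) - n + 1) with 2 by lia. replace i with (n - 1) by lia.
           rewrite <- U0. apply Ub.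
      * rewrite F1 by lia. apply Hb. lia.
  - intros i Hi. destruct (Nat.eq_dec i n).
    + subst. rewrite F2 by lia. replace (n - n + 1) with 1 by lia. exact U1.
    + apply F1. lia.
Qed.

Lemma geodesic_extends_to_ray x y n : dist x y n -> 1 <= n ->
  exists w, ray w /\ w 0 = x /\ w n = y.
Proof.
  intros D Hn. destruct (geodesic_simple_path _ _ _ D) as [l [Hl [Hc [He Hnd]]]].
  set (f := fun i => nth i (x :: l) x).
  destruct (extend_nonbacktracking f n Hn) as [F [Fa [Fb Fe]]].
  { intros i Hi. apply chain_nth; auto. simpl. lia. }
  { intros i Hi E. apply (NoDup_nth (x :: l) x) in E; auto; simpl; lia. }
  exists F. split; [split|split].
  - exact (nonbacktracking_injective F Fa Fb).
  - exact Fa.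
  - rewrite Fe by lia. reflexivity.
  - rewrite Fe by lia. unfold f. rewrite <- Hl, <- last_nth. exact He.
Qed.

Definition glue_rays (w1 w2 : nat -> V) (i : Z) : V :=
  if (0 <=? i)%Z then w1 (Z.to_nat i) else w2 (Z.to_nat (- i)).

Lemma ray_in_apartment w1 : ray w1 ->
  exists w2, ray w2 /\ ~ same_end V w1 w2 /\ on_apartment V adj w1 w2 (w1 0).
Proof.
  intros [W1i W1a].
  set (x := w1 0).
  set (w2 := greedy x (step (w1 1) x)).
  destruct (greedy_nonbacktracking x (step (w1 1) x)) as [W2a W2b]; [apply step_spec|].
  fold w2 in W2a, W2b.
  assert (W20 : w2 0 = x) by reflexivity.
  assert (W21 : w2 1 <> w1 1) by (apply step_spec).
  assert (W1b : forall i, w1 i <> w1 (S (S i))) by (intros i E; apply W1i in E; lia).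
  set (h := glue_rays w1 w2).
  assert (Hp : forall n, h (Z.of_nat n) = w1 n).
  { intros n. unfold h, glue_rays. destruct (Z.leb_spec 0 (Z.of_nat n)); [|lia].
    rewrite Nat2Z.id. auto. }
  assert (Hm : forall n, h (- Z.of_nat n)%Z = w2 n).
  { intros n. destruct n. { simpl. rewrite W20. apply (Hp 0). }
    unfold h, glue_rays. destruct (Z.leb_spec 0 (- Z.of_nat (S n))); [lia|]. f_equal. lia. }
  assert (Hl : line h).
  { apply nonbacktracking_line.
    - intros i. destruct (Z_le_gt_dec 0 i).
      + replace i with (Z.of_nat (Z.to_nat i)) by lia.
        replace (Z.succ (Z.of_nat (Z.to_nat i))) with (Z.of_nat (S (Z.to_nat i))) by lia.
        rewrite !Hp. apply W1a.
      + replace i with (- Z.of_nat (S (Z.to_nat (- i - 1))))%Z by lia.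
        replace (Z.succ (- Z.of_nat (S (Z.to_nat (- i - 1)))))%Z
          with (- Z.of_nat (Z.to_nat (- i - 1)))%Z by lia.
        rewrite !Hm. apply adj_sym. apply W2a.
    - intros i. destruct (Z_le_gt_dec 0 i).
      + replace i with (Z.of_nat (Z.to_nat i)) by lia.
        replace (Z.succ (Z.succ (Z.of_nat (Z.to_nat i))))
          with (Z.of_nat (S (S (Z.to_nat i)))) by lia.
        rewrite !Hp. apply W1b.
      + destruct (Z.eq_dec i (-1)).
        * subst. replace (-1)%Z with (- Z.of_nat 1)%Z by lia.
          replace (Z.succ (Z.succ (- Z.of_nat 1))) with (Z.of_nat 1) by lia.
          rewrite Hm, Hp. exact W21.
        * replace i with (- Z.of_nat (S (S (Z.to_nat (- i - 2)))))%Z by lia.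
          replace (Z.succ (Z.succ (- Z.of_nat (S (S (Z.to_nat (- i - 2)))))))%Z
            with (- Z.of_nat (Z.to_nat (- i - 2)))%Z by lia.
          rewrite !Hm. intro E. apply (W2b (Z.to_nat (- i - 2))). auto. }
  exists w2. split; [|split].
  - split; [exact (nonbacktracking_injective w2 W2a W2b)|exact W2a].
  - intros Se. apply same_end_iff in Se. destruct Se as [a [b [p Hab]]].
    specialize (Hab (S p) ltac:(lia)). rewrite <- Hp, <- Hm in Hab.
    apply (proj1 Hl) in Hab. lia.
  - exists h. split; [exact Hl|split; [|split]].
    + apply same_end_ext. exact Hp.
    + apply same_end_ext. exact Hm.
    + exists 0%Z. apply (Hp 0).
Qed.

(* Locally finite graphs: [nbf x] lists the neighbours of [x]; [ball c r]
   is a finite list containing the closed ball of radius [r] around [c]. *)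
Variable nbf : V -> list V.
Hypothesis nbf_spec : forall x y, adj x y <-> In y (nbf x).

Fixpoint ball (c : V) (r : nat) : list V :=
  match r with 0 => [c] | S r' => c :: flat_map (fun y => ball y r') (nbf c) end.

Lemma ball_walk r : forall c x, In x (ball c r) -> exists m, m <= r /\ walk c x m.
Proof.
  induction r as [|r IH]; intros c x Hx; simpl in Hx.
  - destruct Hx as [E|[]]. subst. exists 0. split; auto. constructor.
  - destruct Hx as [E|Hx]. { subst. exists 0. split; [lia|constructor]. }
    apply in_flat_map in Hx. destruct Hx as [y [Hy Hx]].
    destruct (IH y x Hx) as [m [Hm W]]. exists (S m). split; [lia|].
    apply walk_cons with y; auto. apply nbf_spec. exact Hy.
Qed.

Lemma walk_ball c x m : walk c x m -> forall r, m <= r -> In x (ball c r).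
Proof.
  induction 1 as [x|x y z n Hxy Hw IH]; intros r Hr.
  - destruct r; simpl; auto.
  - destruct r as [|r]; [lia|]. simpl. right. apply in_flat_map. exists y. split.
    + apply nbf_spec. exact Hxy.
    + apply IH. lia.
Qed.

Lemma dist_ball c x d : dist c x d -> In x (ball c d).
Proof. intros [W _]. exact (walk_ball _ _ _ W d (le_n d)). Qed.

End TreeGeometry.
Section Conditions.
Variable V : Type.
Variable adj : V -> V -> Prop.
Hypothesis adj_sym : forall x y, adj x y -> adj y x.
Hypothesis adj_irrefl : forall x, ~ adj x x.
Hypothesis connected : forall x y, exists n, walk V adj x y n.
Hypothesis acyclic : ~ has_cycle V adj.
Variable step : V -> V -> V.
Hypothesis step_spec : forall a b, adj b (step a b) /\ step a b <> a.
Variable nbf : V -> list V.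
Hypothesis nbf_spec : forall x y, adj x y <-> In y (nbf x).
Variable G : (V -> V) -> Prop.
Hypothesis G_subgroup : is_subgroup V adj G.
Hypothesis G_closed : is_closed V adj G.

Local Notation dist := (dist V adj).
Local Notation ball := (ball V nbf).

Lemma G_aut g : G g -> is_aut V adj g.
Proof. apply G_subgroup. Qed.

Lemma cond1_iff_cond2 : vertex_transitive V G ->
  weakly_two_transitive V adj G <-> cond2 V adj G.
Proof.
  intros Htr. split.
  - intros Hw x y z n Dy Dz. destruct (Hw x y x z n Dy Dz) as [g [Gg [E1 E2]]]. eauto.
  - intros H2 x1 x2 y1 y2 n D1 D2.
    (* move [x1] to [y1], then rotate around [y1] *)
    destruct (Htr x1 y1) as [g [Gg E1]].
    assert (D : dist y1 (g x2) n)
      by (rewrite <- E1; exact (proj1 (proj2 (G_aut g Gg) x1 x2 n) D1)).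
    destruct (H2 y1 (g x2) y2 n D D2) as [h [Gh [Eh1 Eh2]]].
    exists (fun v => h (g v)). split; [apply G_subgroup; auto|]. rewrite E1. auto.
Qed.

Section Limits.
Variable gs : nat -> V -> V.
Hypothesis gs_G : forall n, G (gs n).
Variables x0 y0 : V.
Hypothesis gs_base : forall n, gs n x0 = y0.

Lemma gs_maps_balls n r x : In x (ball x0 r) -> In (gs n x) (ball y0 r).
Proof.
  intros Hx. destruct (ball_walk V adj nbf nbf_spec r _ _ Hx) as [m [Hm W]].
  destruct (dist_exists V adj _ _ _ W) as [d Hd].
  assert (d <= m) by (apply (proj2 Hd); auto).
  apply (G_aut _ (gs_G n)) in Hd. rewrite gs_base in Hd. destruct Hd as [Wd _].
  apply (walk_ball V adj nbf nbf_spec _ _ _ Wd). lia.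
Qed.

(* A cluster point of [gs] for pointwise convergence is an automorphism:
   distances are tested on two points, and preimages lie in a bounded ball. *)
Lemma cluster_point_aut (phi : V -> V) :
  (forall F N, exists n, N <= n /\ forall x, In x F -> gs n x = phi x) -> is_aut V adj phi.
Proof.
  intros Hphi.
  assert (Pd : forall x y n, dist x y n <-> dist (phi x) (phi y) n).
  { intros x y n. destruct (Hphi [x; y] 0) as [n' [_ Hn']].
    rewrite <- (Hn' x), <- (Hn' y) by (simpl; auto).
    apply (G_aut _ (gs_G n')). }
  assert (Pinj : forall x y, phi x = phi y -> x = y).
  { intros x y E. assert (D : dist (phi x) (phi y) 0) by (rewrite E; split; [constructor|lia]).
    apply Pd in D. exact (walk0 V adj _ _ (proj1 D)). }
  assert (Psurj : forall y, exists x, phi x = y).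
  { intros y. destruct (connected y0 y) as [m W]. destruct (dist_exists V adj _ _ _ W) as [d Hd].
    destruct (Hphi (ball x0 d) 0) as [n' [_ Hn']].
    pose proof (G_aut _ (gs_G n')) as [[g' [Hg1 Hg2]] Hdn].
    exists (g' y). rewrite <- Hn'; [apply Hg2|].
    apply (dist_ball V adj nbf nbf_spec). apply Hdn. rewrite gs_base, Hg2. exact Hd. }
  split; auto.
  exists (fun y => epsilon (inhabits y) (fun x => phi x = y)). split.
  - intros x. apply Pinj. apply (epsilon_spec (inhabits (phi x)) (fun z => phi z = phi x)). eauto.
  - intros y. apply (epsilon_spec (inhabits y) (fun z => phi z = y)). auto.
Qed.

(* Since [G] is closed and the tree is locally finite, [gs] has a cluster
   point in [G]. *)
Lemma cluster_point_in_G :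
  exists phi, G phi /\ forall F N, exists n, N <= n /\ forall x, In x F -> gs n x = phi x.
Proof.
  destruct (diagonal_cluster_point V gs (ball x0) (ball y0)) as [phi Hphi].
  { intros j n x Hx. exact (gs_maps_balls n j x Hx). }
  { intros x. destruct (connected x0 x) as [m W]. exists m.
    exact (walk_ball V adj nbf nbf_spec _ _ _ W m (le_n m)). }
  exists phi. split; auto.
  apply G_closed; [exact (cluster_point_aut phi Hphi)|].
  intros F. destruct (Hphi F 0) as [n [_ Hn]]. eauto.
Qed.

End Limits.

Lemma segments_matched h k n : weakly_two_transitive V adj G ->
  line V adj h -> line V adj k ->
  exists g, G g /\ forall i, (- Z.of_nat n <= i <= Z.of_nat n)%Z -> g (h i) = k i.
Proof.
  intros Hw Hh Hk.
  set (r := fun t => h (Z.of_nat t - Z.of_nat n)%Z).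
  set (s := fun t => k (Z.of_nat t - Z.of_nat n)%Z).
  assert (Rr : ray V adj r) by apply line_half_ray, Hh.
  assert (Rs : ray V adj s) by apply line_half_ray, Hk.
  destruct (Hw (r 0) (r (2 * n)) (s 0) (s (2 * n)) (2 * n)) as [g [Gg [E1 E2]]];
    try apply ray_dist; auto.
  exists g. split; auto.
  (* the geodesic from [g (r 0)] to [g (r (2n))] is the one from [s 0] to [s (2n)] *)
  destruct (rays_agree V adj adj_sym acyclic (fun t => g (r t)) s (2 * n) (2 * n))
    as [_ Ag]; auto.
  { apply aut_ray; auto. apply G_aut; auto. }
  intros i Hi. specialize (Ag (Z.to_nat (i + Z.of_nat n)) ltac:(lia)).
  unfold r, s in Ag.
  replace (Z.of_nat (Z.to_nat (i + Z.of_nat n)) - Z.of_nat n)%Z with i in Ag by lia.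
  exact Ag.
Qed.

(* Under (1), any line can be moved onto any other line, by a limit of the
   elements matching longer and longer segments. *)
Lemma lines_matched h k : weakly_two_transitive V adj G ->
  line V adj h -> line V adj k -> exists g, G g /\ forall i, g (h i) = k i.
Proof.
  intros Hw Hh Hk.
  set (gs := fun n => proj1_sig (constructive_indefinite_description _
                                   (segments_matched h k n Hw Hh Hk))).
  assert (Hgs : forall n, G (gs n) /\
            forall i, (- Z.of_nat n <= i <= Z.of_nat n)%Z -> gs n (h i) = k i)
    by (intros n; exact (proj2_sig (constructive_indefinite_description _
                                      (segments_matched h k n Hw Hh Hk)))).
  destruct (cluster_point_in_G gs (fun n => proj1 (Hgs n)) (h 0%Z) (k 0%Z))
    as [phi [Gphi Hphi]].
  { intros n. apply (proj2 (Hgs n)). lia. }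
  exists phi. split; auto.
  intros i. destruct (Hphi [h i] (Z.to_nat (Z.abs i))) as [n [Hn Hn']].
  rewrite <- Hn' by (simpl; auto). apply Hgs. lia.
Qed.

(* (1) implies (3): move the apartment [h] through [x0] onto the apartment [k]
   through [y0], reparametrised so that [x0] goes to [y0]; ends follow. *)
Lemma cond1_cond3 : weakly_two_transitive V adj G -> cond3 V adj G.
Proof.
  intros Hw w1 w2 s1 s2 x0 y0 _ _ _ _ _ _
    [h [Hh [Eh1 [Eh2 [z Hz]]]]] [k [Hk [Ek1 [Ek2 [z' Hz']]]]].
  set (c := (z' - z)%Z).
  destruct (lines_matched h (fun i => k (i + c)%Z) Hw Hh (line_translate V adj k c Hk))
    as [g [Gg Eg]].
  exists g. split; [auto|split; [|split]].
  - rewrite <- Hz, Eg, <- Hz'. f_equal. unfold c. lia.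
  - apply (same_end_trans _ (fun n => g (h (Z.of_nat n)))).
    { apply same_end_sym, same_end_comp. exact Eh1. }
    apply (same_end_trans _ (fun n => k (Z.of_nat n)) _); [|exact Ek1].
    apply (same_end_trans _ (fun n => k (Z.of_nat n + c)%Z)).
    + apply same_end_ext. intros i. apply Eg.
    + apply same_end_shift_pos.
  - apply (same_end_trans _ (fun n => g (h (- Z.of_nat n)%Z))).
    { apply same_end_sym, same_end_comp. exact Eh2. }
    apply (same_end_trans _ (fun n => k (- Z.of_nat n)%Z)); [|exact Ek2].
    apply (same_end_trans _ (fun n => k (- Z.of_nat n + c)%Z)).
    + apply same_end_ext. intros i. apply Eg.
    + apply same_end_shift_neg.
Qed.

(* (3) implies (2): extend the geodesics [x y] and [x z] to rays, complete these
   to apartments through [x]; an element of [G] fixing [x] and carrying the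
   first ray to the end of the second maps the first ray onto the second. *)
Lemma cond3_cond2 : cond3 V adj G -> cond2 V adj G.
Proof.
  intros H3 x y z n Dy Dz.
  destruct n as [|n].
  { pose proof (walk0 V adj _ _ (proj1 Dy)). pose proof (walk0 V adj _ _ (proj1 Dz)). subst.
    exists (fun v => v). split; [apply G_subgroup|auto]. }
  destruct (geodesic_extends_to_ray V adj adj_irrefl acyclic step step_spec x y (S n) Dy)
    as [w1 [R1 [W10 W1n]]]; [lia|].
  destruct (geodesic_extends_to_ray V adj adj_irrefl acyclic step step_spec x z (S n) Dz)
    as [s1 [S1 [S10 S1n]]]; [lia|].
  destruct (ray_in_apartment V adj adj_sym adj_irrefl acyclic step step_spec w1 R1)
    as [w2 [R2 [N1 A1]]].
  destruct (ray_in_apartment V adj adj_sym adj_irrefl acyclic step step_spec s1 S1)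
    as [s2 [S2 [N2 A2]]].
  rewrite W10 in A1. rewrite S10 in A2.
  destruct (H3 w1 w2 s1 s2 x x R1 R2 S1 S2 N1 N2 A1 A2) as [g [Gg [Gx [E1 _]]]].
  exists g. split; [auto|split; [auto|]].
  apply same_end_iff in E1. destruct E1 as [a [b [p Hab]]].
  specialize (Hab (S (p + n)) ltac:(lia)).
  destruct (rays_agree V adj adj_sym acyclic (fun t => g (w1 t)) s1
              (S (p + n) + a) (S (p + n) + b)) as [_ Ag]; auto.
  - apply aut_ray; auto. apply G_aut; auto.
  - simpl. rewrite W10, S10. auto.
  - specialize (Ag (S n) ltac:(lia)). simpl in Ag. rewrite W1n, S1n in Ag. exact Ag.
Qed.

End Conditions.

Lemma bruhat_tits_locally_finite V adj : is_bruhat_tits_tree V adj ->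
  exists nbf : V -> list V, forall x y, adj x y <-> In y (nbf x).
Proof.
  intros [_ [m [_ Hdeg]]].
  assert (H : forall x, exists nb : list V, forall y, adj x y <-> In y nb)
    by (intros x; destruct (Hdeg x) as [nb [_ [_ Hnb]]]; eauto).
  exists (fun x => proj1_sig (constructive_indefinite_description _ (H x))).
  intros x. exact (proj2_sig (constructive_indefinite_description _ (H x))).
Qed.

Lemma bruhat_tits_no_leaves V adj : is_bruhat_tits_tree V adj ->
  exists step : V -> V -> V, forall a b, adj b (step a b) /\ step a b <> a.
Proof.
  intros [_ [m [Hm Hdeg]]].
  (* [b] has at least two neighbours, so one of them differs from [a] *)
  assert (H : forall a b, exists y, adj b y /\ y <> a).
  { intros a b. destruct (Hdeg b) as [nb [Hl [Hn Hi]]].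
    destruct nb as [|y1 [|y2 l]]; simpl in Hl; try lia.
    inversion Hn as [|? ? Hy1 _]; subst.
    destruct (classic (y1 = a)) as [<-|E].
    - exists y2. split; [apply Hi; simpl; auto|]. intros <-. apply Hy1. left; auto.
    - exists y1. split; [apply Hi; simpl; auto|auto]. }
  exists (fun a b => proj1_sig (constructive_indefinite_description _ (H a b))).
  intros a b. exact (proj2_sig (constructive_indefinite_description _ (H a b))).
Qed.

Theorem mainTheorem1 (V : Type) (adj : V -> V -> Prop) (G : (V -> V) -> Prop) :
  is_bruhat_tits_tree V adj ->
  is_subgroup V adj G -> is_closed V adj G -> vertex_transitive V G ->
  (weakly_two_transitive V adj G <-> cond2 V adj G) /\
  (cond2 V adj G <-> cond3 V adj G).
Proof.
  intros HBT HG Hcl Htr.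
  destruct (bruhat_tits_locally_finite V adj HBT) as [nbf Hnbf].
  destruct (bruhat_tits_no_leaves V adj HBT) as [step Hstep].
  destruct HBT as [[_ [Hsym [Hirr [Hconn Hacyc]]]] _].
  pose proof (cond1_iff_cond2 V adj G HG Htr) as E12.
  split; [exact E12|]. split.
  - intros H2. apply E12 in H2.
    exact (cond1_cond3 V adj Hsym Hirr Hconn Hacyc nbf Hnbf G HG Hcl H2).
  - exact (cond3_cond2 V adj Hsym Hirr Hacyc step Hstep G HG).
Qed.
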